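(* Let $n\ge 2$, let $a_1,\dots,a_n$ be real numbers, and put $C(t)=\sum_{j=1}^n a_j\cos jt$, $S(t)=\sum_{j=1}^n a_j\sin jt$. Suppose $S(t_1)=0$ for some $t_1\in(0,\pi)$. Then there exist unique real numbers $a^{(1)}_1,\dots,a^{(1)}_{n-1}$ such that for all real $t$ $$S(t)=(\cos t-\cos t_1)\sum_{j=1}^{n-1}a^{(1)}_j\sin jt,\qquad C(t)=-\frac{a^{(1)}_1}{2}+(\cos t-\cos t_1)\sum_{j=1}^{n-1}a^{(1)}_j\cos jt .$$ *)

From Stdlib Require Export Reals Lra Lia.
Open Scope R_scope.

Fixpoint sum_range (m : nat) (f : nat -> R) : R :=
  match m with
  | O => 0
  | S k => sum_range k f + f (S k)
  end.

Definition Ssum (n : nat) (a : nat -> R) (t : R) : R :=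
  sum_range n (fun j => a j * sin (INR j * t)).

Definition Csum (n : nat) (a : nat -> R) (t : R) : R :=
  sum_range n (fun j => a j * cos (INR j * t)).

(* Since cos t cos jt and cos t sin jt are averages of the neighbouring harmonics,
   multiplying a trigonometric sum with coefficients b by (cos t - c) acts on the
   coefficients by the three-term operator [prod_coef c].  Solving
   [prod_coef c b = a] downwards from b_n = b_(n+1) = 0 determines b; what is left
   over is the boundary term -b_0 sin t / 2 in S, which must vanish because
   S(t_1) = 0 and sin t_1 > 0, and the constant b_1 / 2 in C.  Uniqueness reduces,
   through the same operator, to the linear independence of 1, cos t, ..., cos mt,
   obtained by induction on m: the combination f(t+h) + f(t-h) + 2 f(t) with
   h = pi/(m+1) kills the top harmonic. *)

From Stdlib Require Import Reals Lra Lia.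
Open Scope R_scope.

Lemma sum_range_ext m f f' :
  (forall j, (1 <= j <= m)%nat -> f j = f' j) -> sum_range m f = sum_range m f'.
Proof.
induction m as [|m IH]; intros Hff'; cbn [sum_range]; [reflexivity|].
rewrite IH by (intros; apply Hff'; lia).
rewrite (Hff' (S m)) by lia; reflexivity.
Qed.

Lemma sum_range_sub m f f' :
  sum_range m (fun j => f j - f' j) = sum_range m f - sum_range m f'.
Proof. induction m as [|m IH]; cbn [sum_range]; [ring|]. rewrite IH; ring. Qed.

Lemma sum_range_zero m : sum_range m (fun _ => 0) = 0.
Proof. induction m as [|m IH]; cbn [sum_range]; [ring|]. rewrite IH; ring. Qed.

Lemma Ssum_ext m b b' t :
  (forall j, (1 <= j <= m)%nat -> b j = b' j) -> Ssum m b t = Ssum m b' t.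
Proof. intros Hbb'; apply sum_range_ext; intros j Hj; rewrite Hbb' by exact Hj; reflexivity. Qed.

Lemma Csum_ext m b b' t :
  (forall j, (1 <= j <= m)%nat -> b j = b' j) -> Csum m b t = Csum m b' t.
Proof. intros Hbb'; apply sum_range_ext; intros j Hj; rewrite Hbb' by exact Hj; reflexivity. Qed.

Lemma Csum_succ m b t : Csum (S m) b t = Csum m b t + b (S m) * cos (INR (S m) * t).
Proof. reflexivity. Qed.

Lemma Csum_sub m b b' t : Csum m (fun j => b j - b' j) t = Csum m b t - Csum m b' t.
Proof.
unfold Csum; rewrite <- sum_range_sub.
apply sum_range_ext; intros; ring.
Qed.

Lemma Csum_vanishing m e t : (forall j, (1 <= j <= m)%nat -> e j = 0) -> Csum m e t = 0.
Proof.
intros He; rewrite (Csum_ext m e (fun _ => 0)) by exact He.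
unfold Csum; transitivity (sum_range m (fun _ => 0)).
- apply sum_range_ext; intros; ring.
- apply sum_range_zero.
Qed.

Lemma sin_three_term t k :
  sin (INR (S (S k)) * t) + sin (INR k * t) = 2 * cos t * sin (INR (S k) * t).
Proof.
replace (INR (S (S k)) * t) with (INR (S k) * t + t) by (rewrite (S_INR (S k)); ring).
replace (INR k * t) with (INR (S k) * t - t) by (rewrite (S_INR k); ring).
rewrite sin_plus, sin_minus; ring.
Qed.

Lemma cos_three_term t k :
  cos (INR (S (S k)) * t) + cos (INR k * t) = 2 * cos t * cos (INR (S k) * t).
Proof.
replace (INR (S (S k)) * t) with (INR (S k) * t + t) by (rewrite (S_INR (S k)); ring).
replace (INR k * t) with (INR (S k) * t - t) by (rewrite (S_INR k); ring).
rewrite cos_plus, cos_minus; ring.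
Qed.

Definition prod_coef (c : R) (g : nat -> R) (k : nat) : R :=
  (g (pred k) + g (S k)) / 2 - c * g k.

Lemma mul_three_term_sum (c u : R) (x : nat -> R)
  (Hx : forall k, x (S (S k)) + x k = 2 * u * x (S k)) (g : nat -> R) m :
  (u - c) * sum_range m (fun j => g j * x j) =
  sum_range (S m) (fun k => prod_coef c g k * x k) - g 0%nat / 2 * x 1%nat
  + g 1%nat / 2 * x 0%nat - g (S m) / 2 * x m - g (S (S m)) / 2 * x (S m)
  + c * g (S m) * x (S m).
Proof.
induction m as [|m IH].
- cbn [sum_range]; unfold prod_coef; cbn [pred]; lra.
- cbn [sum_range] in *; rewrite Rmult_plus_distr_l, IH.
  unfold prod_coef; cbn [pred].
  replace (x (S (S m))) with (2 * u * x (S m) - x m) by (rewrite <- (Hx m); ring).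
  field.
Qed.

Lemma Ssum_mul_cos_sub c g m t :
  g (S m) = 0 -> g (S (S m)) = 0 ->
  (cos t - c) * Ssum m g t = Ssum (S m) (prod_coef c g) t - g 0%nat / 2 * sin t.
Proof.
intros Hm HSm; unfold Ssum.
rewrite (mul_three_term_sum c (cos t) (fun k => sin (INR k * t)) (sin_three_term t)).
rewrite Hm, HSm; change (INR 0) with 0; change (INR 1) with 1.
rewrite Rmult_0_l, Rmult_1_l, sin_0; field.
Qed.

Lemma Csum_mul_cos_sub c g m t :
  g (S m) = 0 -> g (S (S m)) = 0 ->
  (cos t - c) * Csum m g t
  = Csum (S m) (prod_coef c g) t - g 0%nat / 2 * cos t + g 1%nat / 2.
Proof.
intros Hm HSm; unfold Csum.
rewrite (mul_three_term_sum c (cos t) (fun k => cos (INR k * t)) (cos_three_term t)).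
rewrite Hm, HSm; change (INR 0) with 0; change (INR 1) with 1.
rewrite Rmult_0_l, Rmult_1_l, cos_0; field.
Qed.

Lemma Csum_shift_comb m e h K t :
  Csum m e (t + h) + Csum m e (t - h) - 2 * K * Csum m e t
  = Csum m (fun j => 2 * e j * (cos (INR j * h) - K)) t.
Proof.
unfold Csum; induction m as [|m IH]; cbn [sum_range]; [ring|].
rewrite <- IH.
replace (INR (S m) * (t + h)) with (INR (S m) * t + INR (S m) * h) by ring.
replace (INR (S m) * (t - h)) with (INR (S m) * t - INR (S m) * h) by ring.
rewrite cos_plus, cos_minus; ring.
Qed.

Lemma cos_mul_PI_div_gt_m1 j N : (j < N)%nat -> -1 < cos (INR j * (PI / INR N)).
Proof.
intros HjN.
assert (HN : 0 < INR N) by (apply lt_0_INR; lia).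
assert (HjN' : INR j < INR N) by (apply lt_INR; exact HjN).
assert (Hj : 0 <= INR j) by apply pos_INR.
assert (HPI := PI_RGT_0).
assert (Hx : INR j * (PI / INR N) < PI).
{ apply Rmult_lt_reg_r with (INR N); [exact HN|].
  unfold Rdiv; rewrite Rmult_assoc, (Rmult_assoc PI), Rinv_l by lra; nra. }
rewrite <- cos_PI; apply cos_decreasing_1; try lra.
apply Rmult_le_pos; [exact Hj|]; apply Rlt_le, Rdiv_lt_0_compat; lra.
Qed.

Lemma Csum_identically_zero m e e0 :
  (forall t, e0 + Csum m e t = 0) -> e0 = 0 /\ forall j, (1 <= j <= m)%nat -> e j = 0.
Proof.
revert e e0; induction m as [|m IH]; intros e e0 He.
{ split; [specialize (He 0); unfold Csum in He; cbn [sum_range] in He; lra | intros; lia]. }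
set (h := PI / INR (S m)).
assert (Htop : cos (INR (S m) * h) = -1).
{ assert (0 < INR (S m)) by (apply lt_0_INR; lia).
  unfold h; rewrite <- cos_PI; f_equal; field; lra. }
destruct (IH (fun j => 2 * e j * (cos (INR j * h) - cos (INR (S m) * h)))
             (2 * (1 - cos (INR (S m) * h)) * e0)) as [He0 Hlow].
{ intros t.
  assert (Hcomb := Csum_shift_comb (S m) e h (cos (INR (S m) * h)) t).
  rewrite (Csum_succ m (fun j => 2 * e j * (cos (INR j * h) - cos (INR (S m) * h)))) in Hcomb.
  replace (Csum (S m) e (t + h)) with (- e0) in Hcomb by (specialize (He (t + h)); lra).
  replace (Csum (S m) e (t - h)) with (- e0) in Hcomb by (specialize (He (t - h)); lra).
  replace (Csum (S m) e t) with (- e0) in Hcomb by (specialize (He t); lra).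
  lra. }
rewrite Htop in He0.
assert (Hlow' : forall j, (1 <= j <= m)%nat -> e j = 0).
{ intros j Hj; specialize (Hlow j Hj); cbv beta in Hlow.
  assert (Hpos := cos_mul_PI_div_gt_m1 j (S m) ltac:(lia)); fold h in Hpos.
  apply Rmult_integral in Hlow as [Hlow | Hlow]; lra. }
split; [lra|]; intros j Hj.
destruct (Nat.eq_dec j (S m)) as [->|Hne]; [|apply Hlow'; lia].
specialize (He 0); rewrite Csum_succ, (Csum_vanishing m e 0 Hlow'), Rmult_0_r, cos_0 in He.
lra.
Qed.

(* [div_coef_rev a c n i] is g_(n-i), where g solves [prod_coef c g k = a k] by
   g_(k-1) = 2 (a_k + c g_k) - g_(k+1) downwards from g_n = g_(n+1) = 0. *)
Fixpoint div_coef_rev (a : nat -> R) (c : R) (n i : nat) : R :=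
  match i with
  | O => 0
  | S i' => 2 * (a (n - i')%nat + c * div_coef_rev a c n i')
            - match i' with O => 0 | S i'' => div_coef_rev a c n i'' end
  end.

Definition div_coef (a : nat -> R) (c : R) (n j : nat) : R := div_coef_rev a c n (n - j).

Lemma div_coef_vanish a c n j : (n <= j)%nat -> div_coef a c n j = 0.
Proof. intros Hnj; unfold div_coef; replace (n - j)%nat with 0%nat by lia; reflexivity. Qed.

Lemma prod_coef_div_coef a c n k :
  (1 <= k <= n)%nat -> prod_coef c (div_coef a c n) k = a k.
Proof.
intros Hk; unfold prod_coef, div_coef.
replace (n - pred k)%nat with (S (n - k)) by lia.
replace (n - S k)%nat with (pred (n - k)) by lia.
assert (Hnk : (n - (n - k))%nat = k) by lia.
destruct (n - k)%nat as [|i]; cbn [div_coef_rev pred]; rewrite Hnk; field.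
Qed.

Lemma prod_coef_eq0_vanish c d N :
  d N = 0 -> d (S N) = 0 -> (forall k, (1 <= k <= N)%nat -> prod_coef c d k = 0) ->
  forall j, (j <= S N)%nat -> d j = 0.
Proof.
intros HN HSN Hd.
assert (Hdesc : forall i, (i <= N)%nat -> d (N - i)%nat = 0 /\ d (S N - i)%nat = 0).
{ induction i as [|i IH]; intros Hi.
  - rewrite !Nat.sub_0_r; split; assumption.
  - destruct (IH ltac:(lia)) as [Hk HSk].
    replace (S N - S i)%nat with (N - i)%nat by lia; split; [|exact Hk].
    specialize (Hd (N - i)%nat ltac:(lia)); unfold prod_coef in Hd.
    replace (pred (N - i)) with (N - S i)%nat in Hd by lia.
    replace (S (N - i)) with (S N - i)%nat in Hd by lia.
    rewrite Hk, HSk in Hd; lra. }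
intros j Hj; destruct (Nat.eq_dec j (S N)) as [->|Hne]; [exact HSN|].
replace j with (N - (N - j))%nat by lia; apply Hdesc; lia.
Qed.

Definition restrict (m : nat) (f : nat -> R) (j : nat) : R :=
  if andb (Nat.leb 1 j) (Nat.leb j m) then f j else 0.

Lemma restrict_in m f j : (1 <= j <= m)%nat -> restrict m f j = f j.
Proof.
intros Hj; unfold restrict.
destruct (Nat.leb_spec 1 j), (Nat.leb_spec j m); cbn [andb]; reflexivity || lia.
Qed.

Lemma restrict_out m f j : (j = 0 \/ m < j)%nat -> restrict m f j = 0.
Proof.
intros Hj; unfold restrict.
destruct (Nat.leb_spec 1 j), (Nat.leb_spec j m); cbn [andb]; reflexivity || lia.
Qed.

Lemma Csum_quotient_unique m c b b' :
  (forall t, - b 1%nat / 2 + (cos t - c) * Csum m b t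
             = - b' 1%nat / 2 + (cos t - c) * Csum m b' t) ->
  forall j, (1 <= j <= m)%nat -> b j = b' j.
Proof.
intros Hbb'.
destruct m as [|m]; [intros; lia|].
(* Truncation makes the boundary terms of [Csum_mul_cos_sub] vanish. *)
set (d := restrict (S m) (fun j => b j - b' j)).
assert (Hd : forall j, (1 <= j <= S m)%nat -> d j = b j - b' j) by (intros; apply restrict_in; lia).
assert (Hd0 : d 0%nat = 0) by (apply restrict_out; lia).
assert (HdSSm : d (S (S m)) = 0) by (apply restrict_out; lia).
assert (HdSSSm : d (S (S (S m))) = 0) by (apply restrict_out; lia).
assert (Hprod : forall t, 0 + Csum (S (S m)) (prod_coef c d) t = 0).
{ intros t.
  assert (Hmul := Csum_mul_cos_sub c d (S m) t HdSSm HdSSSm).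
  rewrite (Csum_ext (S m) d (fun j => b j - b' j)), Csum_sub, Hd0, (Hd 1%nat) in Hmul
    by (exact Hd || lia).
  specialize (Hbb' t); lra. }
destruct (Csum_identically_zero _ _ _ Hprod) as [_ Hzero].
intros j Hj.
assert (Hdj : d j = 0) by (apply (prod_coef_eq0_vanish c d (S (S m)) HdSSm HdSSSm Hzero); lia).
rewrite Hd in Hdj by exact Hj; lra.
Qed.

Theorem lemma2 (n : nat) (a : nat -> R) (t1 : R) :
  (2 <= n)%nat ->
  0 < t1 < PI ->
  Ssum n a t1 = 0 ->
  exists b : nat -> R,
    (forall t : R,
       Ssum n a t = (cos t - cos t1) * Ssum (n - 1) b t /\
       Csum n a t = - b 1%nat / 2 + (cos t - cos t1) * Csum (n - 1) b t) /\
    (forall b' : nat -> R,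
       (forall t : R,
          Ssum n a t = (cos t - cos t1) * Ssum (n - 1) b' t /\
          Csum n a t = - b' 1%nat / 2 + (cos t - cos t1) * Csum (n - 1) b' t) ->
       forall j : nat, (1 <= j <= n - 1)%nat -> b' j = b j).
Proof.
intros Hn Ht1 HS.
destruct n as [|m]; [lia|]; replace (S m - 1)%nat with m by lia.
set (c := cos t1); set (g := div_coef a c (S m)).
assert (Hg1 : g (S m) = 0) by (apply div_coef_vanish; lia).
assert (Hg2 : g (S (S m)) = 0) by (apply div_coef_vanish; lia).
assert (Hprod : forall k, (1 <= k <= S m)%nat -> prod_coef c g k = a k)
  by (intros; apply prod_coef_div_coef; assumption).
assert (HSmul : forall t, (cos t - c) * Ssum m g t = Ssum (S m) a t - g 0%nat / 2 * sin t)
  by (intros t; rewrite Ssum_mul_cos_sub, (Ssum_ext (S m) (prod_coef c g) a) by assumption; reflexivity).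
assert (Hg0 : g 0%nat = 0).
{ specialize (HSmul t1); rewrite HS in HSmul; fold c in HSmul.
  assert (Hsin : 0 < sin t1) by (apply sin_gt_0; lra).
  replace (c - c) with 0 in HSmul by ring; nra. }
assert (HCmul : forall t, Csum (S m) a t = - g 1%nat / 2 + (cos t - c) * Csum m g t)
  by (intros t; rewrite Csum_mul_cos_sub, Hg0, (Csum_ext (S m) (prod_coef c g) a) by assumption; field).
exists g; split.
- intros t; split; [rewrite HSmul, Hg0; field | apply HCmul].
- intros b' Hb' j Hj; symmetry.
  apply (Csum_quotient_unique m c g b'); [|exact Hj].
  intros t; rewrite <- HCmul; exact (proj2 (Hb' t)).
Qed.
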